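(* Let $\mathcal{R}$ be a multiset rewriting (MSR) system over a fact signature satisfying the protocol format assumptions described in the context, with $n$ protocol roles, and let $\mathcal{R}_{\mathsf{intf}}$ be its interface model (constructed as in the context). Then every filtered trace of $\mathcal{R}_{\mathsf{intf}}$ is a filtered trace of $\mathcal{R}$, i.e. $\mathrm{Tr}'(\mathcal{R}_{\mathsf{intf}}) \subseteq \mathrm{Tr}'(\mathcal{R})$.
   Context: Terms and messages. Fix a finite signature $\Sigma$ of function symbols, a set of names $\mathcal{N} = \mathit{fresh} \cup \mathit{pub}$ (fresh names and countably many public names) and a set of variables $\mathcal{V}$; terms are $\mathcal{T} = \mathcal{T}_\Sigma(\mathcal{N}\cup\mathcal{V})$, messages $\mathcal{M}$ are ground terms. An equational theory $\mathsf{E}$ induces the equality $=_\mathsf{E}$ (the least congruence containing $\mathsf{E}$, closed under substitution). Facts and MSR. A fact signature $\Sigma_{\mathsf{facts}} = \Sigma_{\mathsf{lin}} \uplus \Sigma_{\mathsf{per}}$ of fact symbols is partitioned into linear and persistent symbols; facts are $F(t_1,\dots,t_k)$ with $F$ of arity $k$ and $t_j \in \mathcal{T}$, partitioned accordingly into $\mathcal{F}_{\mathsf{lin}}\uplus\mathcal{F}_{\mathsf{per}}$. An MSR rule $l \xrightarrow{a} r$ has multisets of facts $l,a,r$; an MSR system is a finite set of rules. Its semantics is an LTS whose states are multisets of ground facts, with initial state the empty multiset, and with transition $S \xrightarrow{a'} (S \setminus^{\#} (l' \cap^{\#} \mathcal{F}_{\mathsf{lin}})) \cup^{\#} r'$ whenever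 $l \xrightarrow{a} r$ is a rule, $\theta$ is a ground instantiation of its variables, $l' \xrightarrow{a'} r' =_\mathsf{E} (l\xrightarrow{a} r)\theta$, $l' \cap^{\#} \mathcal{F}_{\mathsf{lin}} \subseteq^{\#} S$ and $\mathrm{set}(l') \cap \mathcal{F}_{\mathsf{per}} \subseteq \mathrm{set}(S)$ (here $\cup^\#,\setminus^\#,\subseteq^\#,\cap^\#$ are multiset operations, and $M\cap^\# X$ keeps the elements of $M$ lying in the set $X$ with their multiplicities). $\mathrm{Tr}(\mathcal{R})$ is the set of label sequences $\langle a_1,\dots,a_m\rangle$ of finite executions from the empty state, and $\mathrm{Tr}'(\mathcal{R})$ is obtained from $\mathrm{Tr}(\mathcal{R})$ by deleting all empty labels from each sequence. Reserved symbols: $\mathsf{K}\in\Sigma_{\mathsf{per}}$ (attacker knowledge) and $\mathsf{Fr},\mathsf{in},\mathsf{out}\in\Sigma_{\mathsf{lin}}$ (freshness, input, output). Format assumptions. The fact signature has the form $\Sigma_{\mathsf{facts}} = \Sigma_{\mathsf{act}} \uplus \Sigma_{\mathsf{env}} \uplus \biguplus_{1\le i\le n} \Sigma^i_{\mathsf{state}}$ (action, environment and role-$i$ state fact symbols). $\Sigma_{\mathsf{env}}$ contains disjoint subsets $\Sigma_{\mathsf{in}}$ and $\Sigma_{\mathsf{out}}$ with $\mathsf{Fr},\mathsf{in}\in\Sigma_{\mathsf{in}}$, $\mathsf{out}\in\Sigma_{\mathsf{out}}$, $\mathsf{K}\in\Sigma_{\mathsf{env}}\setminus(\Sigma_{\mathsf{in}}\cup\Sigma_{\mathsf{out}})$,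 and for each role $i$ a setup symbol $\mathsf{Setup}_i\in\Sigma_{\mathsf{in}}$. The rules are $\mathcal{R} = \mathcal{R}_{\mathsf{env}} \uplus \biguplus_{1\le i\le n}\mathcal{R}_i$ (pairwise disjoint), where $\mathcal{R}_{\mathsf{env}}$ contains the attacker's message deduction rules and the freshness rule $[] \xrightarrow{[\mathsf{Fr}(x)]} [\mathsf{Fr}(x)]$ for $x$ of fresh type. All rule labels use only symbols from $\Sigma_{\mathsf{act}}$. Every rule of $\mathcal{R}_{\mathsf{env}}$ uses only symbols from $\Sigma_{\mathsf{env}}$ in its premises and conclusions; a rule producing a $\mathsf{Setup}_i$ fact lies in $\mathcal{R}_{\mathsf{env}}$, produces no other fact and has empty label (these are the role setup rules). Every rule $l\xrightarrow{a} r\in\mathcal{R}_i$ satisfies: the symbols of $l$ lie in $\Sigma^i_{\mathsf{state}}\cup\Sigma_{\mathsf{in}}$, those of $r$ lie in $\Sigma^i_{\mathsf{state}}\cup\Sigma_{\mathsf{out}}$, $r$ contains at least one state fact, and there is $k_i\ge 1$ such that the first $k_i$ arguments of all state facts and $\mathsf{Setup}_i$ facts in the rule coincide, the first of them being a thread identifier $\mathit{rid}$ of fresh type. Interface model. Let $\Sigma_{\mathsf{in}}^- = \Sigma_{\mathsf{in}}\setminus\{\mathsf{Setup}_1,\dots,\mathsf{Setup}_n\}$. For each $F\in\Sigma^-_{\mathsf{in}}\cup\Sigma_{\mathsf{out}}$ and each role $i$ add a new ''buffer'' symbol $F_i$ (with one more argument, of the same linearity as $F$). $\mathcal{R}'_i$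 is obtained from $\mathcal{R}_i$ by replacing in every rule each fact $F(t_1,\dots,t_k)$ with $F\in\Sigma^-_{\mathsf{in}}\cup\Sigma_{\mathsf{out}}$ by $F_i(\mathit{rid},t_1,\dots,t_k)$, where $\mathit{rid}$ is the rule's thread identifier. $\mathcal{R}_{\mathsf{io}}$ consists, for each role $i$, of the rules $[F(x_1,\dots,x_k)]\xrightarrow{[]}[F_i(\mathit{rid},x_1,\dots,x_k)]$ for $F\in\Sigma^-_{\mathsf{in}}$ and $[G_i(\mathit{rid},x_1,\dots,x_k)]\xrightarrow{[]}[G(x_1,\dots,x_k)]$ for $G\in\Sigma_{\mathsf{out}}$, together with all role setup rules, which are removed from $\mathcal{R}_{\mathsf{env}}$; the remaining environment rules form $\mathcal{R}^-_{\mathsf{env}}$. Finally $\mathcal{R}_{\mathsf{intf}} = \mathcal{R}^-_{\mathsf{env}}\uplus\mathcal{R}_{\mathsf{io}}\uplus\biguplus_i \mathcal{R}'_i$. *)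

(* plain Rocq with lists; multisets are lists up to Permutation. *)
From Stdlib Require Import List Permutation Arith.
Import ListNotations.
Set Implicit Arguments.

Inductive sort := SMsg | SFresh | SPub.
Record var := Var { vsort : sort; vidx : nat }.

Inductive name := NFresh (k : nat) | NPub (k : nat).

Record funsig := {
  fsym : Type;
  farity : fsym -> nat;
  fsym_finite : exists l : list fsym, forall f, List.In f l }.

Inductive term (Fn : Type) : Type :=
| TVar (v : var)
| TName (a : name)
| TApp (f : Fn) (args : list (term Fn)).
Arguments TVar {Fn} v.
Arguments TName {Fn} a.
Arguments TApp {Fn} f args.

Fixpoint wf_term (Sg : funsig) (t : term (fsym Sg)) : Prop :=
  match t with
  | TApp f args =>
      length args = farity Sg f /\
      (fix go (l : list (term (fsym Sg))) : Prop :=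
         match l with [] => True | u :: l' => @wf_term Sg u /\ go l' end) args
  | _ => True
  end.

Arguments wf_term {Sg} t.

Fixpoint ground (Fn : Type) (t : term Fn) : Prop :=
  match t with
  | TVar _ => False
  | TName _ => True
  | TApp _ args =>
      (fix go (l : list (term Fn)) : Prop :=
         match l with [] => True | u :: l' => @ground Fn u /\ go l' end) args
  end.

Fixpoint subst (Fn : Type) (th : var -> term Fn) (t : term Fn) : term Fn :=
  match t with
  | TVar v => th v
  | TName a => TName a
  | TApp f args => TApp f (map (@subst Fn th) args)
  end.

(* a term has (may instantiate) a variable of the given sort *)
Definition has_sort (Fn : Type) (t : term Fn) (s : sort) : Prop :=
  match s with
  | SMsg => True
  | SFresh => (exists k, t = TName (NFresh k)) \/ (exists w, vsort w = SFresh /\ t = TVar w)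
  | SPub => (exists k, t = TName (NPub k)) \/ (exists w, vsort w = SPub /\ t = TVar w)
  end.

Definition sorted_subst (Fn : Type) (th : var -> term Fn) : Prop :=
  forall v, has_sort (th v) (vsort v).

Inductive eqE (Fn : Type) (E : term Fn -> term Fn -> Prop) : term Fn -> term Fn -> Prop :=
| eqE_refl t : eqE E t t
| eqE_sym t u : eqE E t u -> eqE E u t
| eqE_trans t u w : eqE E t u -> eqE E u w -> eqE E t w
| eqE_ax l r th : E l r -> sorted_subst th -> eqE E (subst th l) (subst th r)
| eqE_cong f pre t t' post :
    eqE E t t' -> eqE E (TApp f (pre ++ t :: post)) (TApp f (pre ++ t' :: post)).

Definition fact (S Fn : Type) := (S * list (term Fn))%type.

Record rule (S Fn : Type) := Rule {
  prem : list (fact S Fn);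
  lab : list (fact S Fn);
  concl : list (fact S Fn) }.
Arguments Rule {S Fn} prem lab concl.

Definition subst_fact (S Fn : Type) (th : var -> term Fn) (f : fact S Fn) : fact S Fn :=
  (fst f, map (subst th) (snd f)).

Definition fact_eqE (S Fn : Type) (E : term Fn -> term Fn -> Prop) (f g : fact S Fn) : Prop :=
  fst f = fst g /\ Forall2 (eqE E) (snd f) (snd g).

Definition ground_inst (Sg : funsig) (th : var -> term (fsym Sg)) : Prop :=
  forall v, ground (th v) /\ wf_term (th v) /\ has_sort (th v) (vsort v).

Arguments ground_inst {Sg} th.

Definition msg_fact (Sg : funsig) (S : Type) (ar : S -> nat) (f : fact S (fsym Sg)) : Prop :=
  length (snd f) = ar (fst f) /\ Forall (fun t => ground t /\ wf_term t) (snd f).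

Arguments msg_fact {Sg S} ar f.

(* One transition  St --a'--> St'  of the LTS of the MSR system R
   (R given as a set of rules; lin F = true iff F is linear). *)
Definition step (Sg : funsig) (S : Type) (ar : S -> nat) (lin : S -> bool)
  (E : term (fsym Sg) -> term (fsym Sg) -> Prop) (R : rule S (fsym Sg) -> Prop)
  (St : list (fact S (fsym Sg))) (a' : list (fact S (fsym Sg)))
  (St' : list (fact S (fsym Sg))) : Prop :=
  exists (ru : rule S (fsym Sg)) (th : var -> term (fsym Sg)) (l' r' : list (fact S (fsym Sg))),
    R ru /\ ground_inst th /\
    Forall2 (fact_eqE E) l' (map (subst_fact th) (prem ru)) /\
    Forall2 (fact_eqE E) a' (map (subst_fact th) (lab ru)) /\
    Forall2 (fact_eqE E) r' (map (subst_fact th) (concl ru)) /\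
    Forall (msg_fact ar) (l' ++ a' ++ r') /\
    (forall f, List.In f l' -> lin (fst f) = false -> List.In f St) /\
    exists rest,
      Permutation St (filter (fun f => lin (fst f)) l' ++ rest) /\
      Permutation St' (rest ++ r').

Arguments step {Sg S} ar lin E R St a' St'.

Inductive reach (Sg : funsig) (S : Type) (ar : S -> nat) (lin : S -> bool)
  (E : term (fsym Sg) -> term (fsym Sg) -> Prop) (R : rule S (fsym Sg) -> Prop)
  : list (list (fact S (fsym Sg))) -> list (fact S (fsym Sg)) -> Prop :=
| reach_nil : @reach Sg S ar lin E R [] []
| reach_step tr St a St' :
    @reach Sg S ar lin E R tr St -> @step Sg S ar lin E R St a St' ->
    @reach Sg S ar lin E R (tr ++ [a]) St'.
Arguments reach {Sg S} ar lin E R _ _.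

Definition Tr (Sg : funsig) (S : Type) (ar : S -> nat) (lin : S -> bool)
  (E : term (fsym Sg) -> term (fsym Sg) -> Prop) (R : rule S (fsym Sg) -> Prop)
  (tr : list (list (fact S (fsym Sg)))) : Prop :=
  exists St, reach ar lin E R tr St.

Definition nonempty (A : Type) (l : list A) : bool :=
  match l with [] => false | _ => true end.

Arguments Tr {Sg S} ar lin E R tr.

Definition Tr' (Sg : funsig) (S : Type) (ar : S -> nat) (lin : S -> bool)
  (E : term (fsym Sg) -> term (fsym Sg) -> Prop) (R : rule S (fsym Sg) -> Prop)
  (t : list (list (fact S (fsym Sg)))) : Prop :=
  exists tr, Tr ar lin E R tr /\ t = filter (@nonempty _) tr.

Arguments Tr' {Sg S} ar lin E R t.

Inductive fclass := CAct | CEnv | CState (i : nat).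

Record factsig := {
  symb : Type;
  sarity : symb -> nat;
  slin : symb -> bool;            (* true = linear, false = persistent *)
  sclass : symb -> fclass;
  isIn : symb -> Prop;
  isOut : symb -> Prop;
  KS : symb; FrS : symb; InS : symb; OutS : symb;
  SetupS : nat -> symb }.

Section Protocol.
Variables (Sg : funsig) (FS : factsig) (n : nat).
Notation Fn := (fsym Sg).
Notation S := (symb FS).
Notation rl := (rule S Fn).

Definition role (i : nat) : Prop := 1 <= i <= n.

Definition R_orig (Renv : list rl) (Rrole : nat -> list rl) (r : rl) : Prop :=
  List.In r Renv \/ exists i, role i /\ List.In r (Rrole i).

Definition wf_rule_fact (f : fact S Fn) : Prop :=
  length (snd f) = sarity FS (fst f) /\ Forall (@wf_term Sg) (snd f).

Definition fresh_rule (r : rl) : Prop :=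
  exists x, vsort x = SFresh /\
    r = Rule [] [(FrS FS, [TVar x])] [(FrS FS, [TVar x])].

Definition distinct_vars (xs : list var) : Prop := NoDup xs.

(* The attacker's message deduction rules (up to choice of variables and
   of their, action-only, labels). *)
Definition md_rules_in (Renv : list rl) : Prop :=
  (exists x a, vsort x = SMsg /\
     List.In (Rule [(OutS FS, [TVar x])] a [(KS FS, [TVar x])]) Renv) /\
  (exists x a, vsort x = SMsg /\
     List.In (Rule [(KS FS, [TVar x])] a [(InS FS, [TVar x])]) Renv) /\
  (exists x a, vsort x = SPub /\
     List.In (Rule [] a [(KS FS, [TVar x])]) Renv) /\
  (exists x a, vsort x = SFresh /\
     List.In (Rule [(FrS FS, [TVar x])] a [(KS FS, [TVar x])]) Renv) /\
  (forall f : Fn, exists xs a,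
     length xs = farity Sg f /\ NoDup xs /\ Forall (fun x => vsort x = SMsg) xs /\
     List.In (Rule (map (fun x => (KS FS, [TVar x])) xs) a
                   [(KS FS, [TApp f (map TVar xs)])]) Renv).

Definition is_setup_sym (F : S) : Prop := exists j, role j /\ F = SetupS FS j.

Definition format_assumptions (Renv : list rl) (Rrole : nat -> list rl) : Prop :=
  (forall F i, sclass FS F = CState i -> role i) /\
  (forall F, isIn FS F -> sclass FS F = CEnv) /\
  (forall F, isOut FS F -> sclass FS F = CEnv) /\
  (forall F, ~ (isIn FS F /\ isOut FS F)) /\
  isIn FS (FrS FS) /\ isIn FS (InS FS) /\ isOut FS (OutS FS) /\
  sclass FS (KS FS) = CEnv /\ ~ isIn FS (KS FS) /\ ~ isOut FS (KS FS) /\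
  slin FS (KS FS) = false /\ slin FS (FrS FS) = true /\
  slin FS (InS FS) = true /\ slin FS (OutS FS) = true /\
  (forall i, role i -> isIn FS (SetupS FS i)) /\
  (forall i j, role i -> role j -> SetupS FS i = SetupS FS j -> i = j) /\
  sarity FS (KS FS) = 1 /\ sarity FS (FrS FS) = 1 /\
  sarity FS (InS FS) = 1 /\ sarity FS (OutS FS) = 1 /\
  (forall i r, role i -> ~ (List.In r Renv /\ List.In r (Rrole i))) /\
  (forall i j r, role i -> role j -> i <> j ->
      ~ (List.In r (Rrole i) /\ List.In r (Rrole j))) /\
  (forall r, R_orig Renv Rrole r ->
     Forall wf_rule_fact (prem r ++ lab r ++ concl r)) /\
  (forall r, R_orig Renv Rrole r ->
     Forall (fun f => sclass FS (fst f) = CAct) (lab r) \/ fresh_rule r) /\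
  (forall i r, role i -> List.In r (Rrole i) ->
     Forall (fun f => sclass FS (fst f) = CAct) (lab r)) /\
  (forall r, List.In r Renv ->
     Forall (fun f => sclass FS (fst f) = CEnv) (prem r ++ concl r)) /\
  (exists r, List.In r Renv /\ fresh_rule r) /\
  md_rules_in Renv /\
  (forall r j f, R_orig Renv Rrole r -> role j -> List.In f (concl r) ->
     fst f = SetupS FS j ->
     List.In r Renv /\ concl r = [f] /\ lab r = []) /\
  (forall i, role i ->
     (forall r, List.In r (Rrole i) ->
        Forall (fun f => sclass FS (fst f) = CState i \/ isIn FS (fst f)) (prem r) /\
        Forall (fun f => sclass FS (fst f) = CState i \/ isOut FS (fst f)) (concl r) /\
        (exists f, List.In f (concl r) /\ sclass FS (fst f) = CState i)) /\
     exists k, 1 <= k /\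
       forall r, List.In r (Rrole i) ->
         exists (rid : var) (p : list (term Fn)),
           vsort rid = SFresh /\ length p = k /\ hd_error p = Some (TVar rid) /\
           forall f, List.In f (prem r ++ concl r) ->
             (sclass FS (fst f) = CState i \/ fst f = SetupS FS i) ->
             exists rest, snd f = p ++ rest).

Inductive xsym := XOrig (F : S) | XBuf (F : S) (i : nat).

Definition xarity (X : xsym) : nat :=
  match X with XOrig F => sarity FS F | XBuf F _ => Datatypes.S (sarity FS F) end.
Definition xlin (X : xsym) : bool :=
  match X with XOrig F => slin FS F | XBuf F _ => slin FS F end.

Notation xrl := (rule xsym Fn).

Definition lift_fact (f : fact S Fn) : fact xsym Fn := (XOrig (fst f), snd f).
Definition lift_rule (r : rl) : xrl :=
  Rule (map lift_fact (prem r)) (map lift_fact (lab r)) (map lift_fact (concl r)).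

Definition buffered (F : S) : Prop :=
  (isIn FS F /\ ~ is_setup_sym F) \/ isOut FS F.

Definition thread_id (i : nat) (r : rl) (rid : term Fn) : Prop :=
  exists F args, List.In (F, rid :: args) (concl r) /\ sclass FS F = CState i.

Definition xfact (i : nat) (rid : term Fn) (f : fact S Fn) (g : fact xsym Fn) : Prop :=
  (buffered (fst f) /\ g = (XBuf (fst f) i, rid :: snd f)) \/
  (~ buffered (fst f) /\ g = lift_fact f).

Definition xrule (i : nat) (r : rl) (r' : xrl) : Prop :=
  exists rid, thread_id i r rid /\
    Forall2 (xfact i rid) (prem r) (prem r') /\
    Forall2 (xfact i rid) (lab r) (lab r') /\
    Forall2 (xfact i rid) (concl r) (concl r').

Definition io_vars (k : nat) : list var := map (fun j => Var SMsg j) (seq 0 k).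
Definition io_rid : var := Var SFresh 0.

Definition io_in_rule (i : nat) (F : S) : xrl :=
  let xs := map TVar (io_vars (sarity FS F)) in
  Rule [(XOrig F, xs)] [] [(XBuf F i, TVar io_rid :: xs)].
Definition io_out_rule (i : nat) (G : S) : xrl :=
  let xs := map TVar (io_vars (sarity FS G)) in
  Rule [(XBuf G i, TVar io_rid :: xs)] [] [(XOrig G, xs)].

Definition is_setup_rule (r : rl) : Prop :=
  exists f, List.In f (concl r) /\ is_setup_sym (fst f).

Definition R_env_minus (Renv : list rl) (r : xrl) : Prop :=
  exists r0, List.In r0 Renv /\ ~ is_setup_rule r0 /\ r = lift_rule r0.

Definition R_io (Renv : list rl) (r : xrl) : Prop :=
  (exists i F, role i /\ isIn FS F /\ ~ is_setup_sym F /\ r = io_in_rule i F) \/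
  (exists i G, role i /\ isOut FS G /\ r = io_out_rule i G) \/
  (exists r0, List.In r0 Renv /\ is_setup_rule r0 /\ r = lift_rule r0).

Definition R_role' (Rrole : nat -> list rl) (i : nat) (r : xrl) : Prop :=
  exists r0, List.In r0 (Rrole i) /\ xrule i r0 r.

Definition R_intf (Renv : list rl) (Rrole : nat -> list rl) (r : xrl) : Prop :=
  R_env_minus Renv r \/ R_io Renv r \/ exists i, role i /\ R_role' Rrole i r.

End Protocol.

From Stdlib Require Import List Permutation.
Import ListNotations.
Set Implicit Arguments.
Unset Strict Implicit.

(* Unbuffering, which forgets the role index and the thread identifier of a
   buffer fact F_i(rid, t1, ..., tk), maps interface states to original ones.
   Under it an I/O rule only moves a fact between the environment and a buffer,
   so it becomes a stuttering step with empty label, while every other interface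
   rule is a copy of an original rule with the same label: labels consist of
   action facts, which are never buffered (these are the only two format
   assumptions the argument needs).  Premises are matched only modulo =_E
   and an I/O rule applied to a persistent input fact duplicates it, so the
   simulation invariant relates linear facts as multisets modulo =_E but
   persistent facts only as sets modulo =_E. *)

Lemma Permutation_filter {A} (p : A -> bool) (l l' : list A) :
  Permutation l l' -> Permutation (filter p l) (filter p l').
Proof.
  induction 1 as [|x l l' _ IH|x y l|l l' l'' _ IH1 _ IH2]; cbn.
  - constructor.
  - destruct (p x); auto.
  - destruct (p x), (p y); auto using perm_swap.
  - eauto using Permutation_trans.
Qed.

Lemma filter_idem {A} (p : A -> bool) (l : list A) : filter p (filter p l) = filter p l.
Proof. apply forallb_filter_id, forallb_filter. Qed.

Lemma filter_filter_negb {A} (p : A -> bool) (l : list A) :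
  filter p (filter (fun x => negb (p x)) l) = [].
Proof. induction l as [|x l IH]; cbn; auto. destruct (p x) eqn:Hx; cbn; rewrite ?Hx; auto. Qed.

Lemma Permutation_filter_negb {A} (p : A -> bool) (l : list A) :
  Permutation l (filter p l ++ filter (fun x => negb (p x)) l).
Proof.
  induction l as [|x l IH]; cbn; auto.
  destruct (p x); cbn; auto using Permutation_cons_app.
Qed.

Lemma Forall2_reflexive {A} (R : A -> A -> Prop) :
  (forall x, R x x) -> forall l, Forall2 R l l.
Proof. induction l; constructor; auto. Qed.

Lemma Forall2_sym {A} (R : A -> A -> Prop) :
  (forall x y, R x y -> R y x) -> forall l m, Forall2 R l m -> Forall2 R m l.
Proof. intros HR l m H. apply Forall2_flip in H. eapply Forall2_impl; [|exact H]; auto. Qed.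

Lemma Forall2_trans {A B C} (R1 : A -> B -> Prop) (R2 : B -> C -> Prop) (R3 : A -> C -> Prop) :
  (forall x y z, R1 x y -> R2 y z -> R3 x z) ->
  forall l m k, Forall2 R1 l m -> Forall2 R2 m k -> Forall2 R3 l k.
Proof.
  intros HR l m k H; revert k.
  induction H; intros k H'; inversion H'; subst; constructor; eauto.
Qed.

Lemma Forall2_filter {A B} (R : A -> B -> Prop) (p : A -> bool) (q : B -> bool) :
  (forall x y, R x y -> p x = q y) ->
  forall l m, Forall2 R l m -> Forall2 R (filter p l) (filter q m).
Proof.
  intros Hpq l m H; induction H as [|x y l m Hxy _ IH]; cbn; auto.
  rewrite (Hpq x y Hxy). destruct (q y); auto.
Qed.

Lemma Forall2_in_r {A B} (R : A -> B -> Prop) l m y :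
  Forall2 R l m -> In y m -> exists x, In x l /\ R x y.
Proof.
  induction 1 as [|x y' l m Hxy _ IH]; cbn; [tauto|].
  intros [<-|Hy]; eauto.
  destruct (IH Hy) as (x' & ? & ?); eauto.
Qed.

Section FactEquality.
Variables (S Fn : Type) (E : term Fn -> term Fn -> Prop).
Notation fE := (@fact_eqE S Fn E).

Lemma fact_eqE_refl f : fE f f.
Proof. split; auto. apply Forall2_reflexive, eqE_refl. Qed.

Lemma fact_eqE_sym f g : fE f g -> fE g f.
Proof. intros [Hs Ha]; split; auto. eapply Forall2_sym; eauto using eqE_sym. Qed.

Lemma fact_eqE_trans f g h : fE f g -> fE g h -> fE f h.
Proof.
  intros [Hs1 Ha1] [Hs2 Ha2]; split; [congruence|].
  eapply Forall2_trans; eauto using eqE_trans.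
Qed.

Definition perm_eqE (A B : list (fact S Fn)) : Prop :=
  exists L, Forall2 fE A L /\ Permutation L B.

Lemma perm_eqE_of_Forall2 A B : Forall2 fE A B -> perm_eqE A B.
Proof. exists B; auto. Qed.

Lemma perm_eqE_of_Permutation A B : Permutation A B -> perm_eqE A B.
Proof. exists A; split; auto using Forall2_reflexive, fact_eqE_refl. Qed.

Lemma perm_eqE_sym A B : perm_eqE A B -> perm_eqE B A.
Proof.
  intros (L & HF & HP).
  destruct (Permutation_Forall2 HP (Forall2_flip HF)) as (L' & HP' & HF').
  exists L'; split; [|now apply Permutation_sym].
  eapply Forall2_impl; [|exact HF']; auto using fact_eqE_sym.
Qed.

Lemma perm_eqE_trans A B C : perm_eqE A B -> perm_eqE B C -> perm_eqE A C.
Proof.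
  intros (L1 & HF1 & HP1) (L2 & HF2 & HP2).
  destruct (Permutation_Forall2 (Permutation_sym HP1) HF2) as (L & HP & HF).
  exists L; split; [|eauto using Permutation_trans, Permutation_sym].
  eapply Forall2_trans; eauto using fact_eqE_trans.
Qed.

Lemma perm_eqE_app A1 A2 B1 B2 :
  perm_eqE A1 B1 -> perm_eqE A2 B2 -> perm_eqE (A1 ++ A2) (B1 ++ B2).
Proof.
  intros (L1 & HF1 & HP1) (L2 & HF2 & HP2).
  exists (L1 ++ L2); auto using Forall2_app, Permutation_app.
Qed.

Lemma perm_eqE_filter (p : fact S Fn -> bool) A B :
  (forall f g, fE f g -> p f = p g) -> perm_eqE A B -> perm_eqE (filter p A) (filter p B).
Proof.
  intros Hp (L & HF & HP).
  exists (filter p L); auto using Forall2_filter, Permutation_filter.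
Qed.

Lemma perm_eqE_in A B g : perm_eqE A B -> In g B -> exists f, In f A /\ fE f g.
Proof.
  intros (L & HF & HP) Hg.
  eapply Forall2_in_r; eauto using Permutation_in, Permutation_sym.
Qed.

End FactEquality.

Section StateSimulation.
Variables (Sg : funsig) (S : Type) (ar : S -> nat) (lin : S -> bool)
  (E : term (fsym Sg) -> term (fsym Sg) -> Prop).
Notation Fn := (fsym Sg).
Notation fE := (@fact_eqE S Fn E).

Definition linear (f : fact S Fn) : bool := lin (fst f).

Lemma linear_fact_eqE f g : fE f g -> linear f = linear g.
Proof. intros [H _]; unfold linear; congruence. Qed.

Definition state_sim (Y St : list (fact S Fn)) : Prop :=
  Forall (msg_fact ar) St /\
  perm_eqE E (filter linear Y) (filter linear St) /\
  (forall f, In f Y -> linear f = false -> exists g, In g St /\ fE f g).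

Lemma state_sim_nil : state_sim [] [].
Proof.
  split; [constructor|split; [apply perm_eqE_of_Permutation; constructor|]].
  intros f [].
Qed.

Lemma state_sim_perm_eqE Y Y' St : state_sim Y St -> perm_eqE E Y Y' -> state_sim Y' St.
Proof.
  intros (Hmsg & Hlin & Hper) HY. split; [auto|split].
  - eapply perm_eqE_trans; [|exact Hlin].
    apply perm_eqE_sym, perm_eqE_filter; auto using linear_fact_eqE.
  - intros f Hf Hl. destruct (perm_eqE_in HY Hf) as (f0 & Hf0 & H0).
    destruct (Hper f0 Hf0) as (g & Hg & H1); [now rewrite (linear_fact_eqE H0)|].
    exists g; eauto using fact_eqE_trans, fact_eqE_sym.
Qed.

Lemma state_sim_dup_persistent Y St f :
  state_sim Y St -> In f Y -> linear f = false -> state_sim (Y ++ [f]) St.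
Proof.
  intros (Hmsg & Hlin & Hper) Hf Hl. split; [auto|split].
  - rewrite filter_app; cbn; rewrite Hl, app_nil_r; auto.
  - intros g Hg; apply in_app_or in Hg as [Hg|[<-|[]]]; auto.
Qed.

Lemma state_sim_app Y St r :
  state_sim Y St -> Forall (msg_fact ar) r -> state_sim (Y ++ r) (St ++ r).
Proof.
  intros (Hmsg & Hlin & Hper) Hr. split; [apply Forall_app; auto|split].
  - rewrite !filter_app. apply perm_eqE_app; auto. apply perm_eqE_of_Permutation; auto.
  - intros f Hf Hl; apply in_app_or in Hf as [Hf|Hf].
    + destruct (Hper f Hf Hl) as (g & ? & ?); exists g; auto using in_or_app.
    + exists f; auto using in_or_app, fact_eqE_refl.
Qed.

Lemma match_premises St l L1 :
  Forall2 fE (filter linear l) L1 -> incl L1 St ->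
  (forall f, In f l -> linear f = false -> exists g, In g St /\ fE f g) ->
  exists l0, Forall2 fE l l0 /\ filter linear l0 = L1 /\ incl l0 St.
Proof.
  revert L1; induction l as [|f l IH]; intros L1 HL1 HL1St Hper; cbn in HL1.
  - inversion HL1; subst. exists []; repeat split; auto using incl_nil_l.
  - assert (Hper' : forall f', In f' l -> linear f' = false ->
                      exists g, In g St /\ fE f' g) by (intros; apply Hper; cbn; auto).
    destruct (linear f) eqn:Hf.
    + inversion HL1 as [|? g ? L1' Hfg HL1']; subst.
      apply incl_cons_inv in HL1St as [Hg HL1St].
      destruct (IH L1' HL1' HL1St Hper') as (l0 & Hl0 & Hfl0 & Hl0St).
      exists (g :: l0); repeat split; auto using incl_cons.
      cbn. rewrite <- (linear_fact_eqE Hfg), Hf, Hfl0; auto.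
    + destruct (Hper f) as (g & Hg & Hfg); cbn; auto.
      destruct (IH L1 HL1 HL1St Hper') as (l0 & Hl0 & Hfl0 & Hl0St).
      exists (g :: l0); repeat split; auto using incl_cons.
      cbn. rewrite <- (linear_fact_eqE Hfg), Hf; auto.
Qed.

Lemma state_sim_consume Y St l rest :
  state_sim Y St -> Permutation Y (filter linear l ++ rest) ->
  (forall f, In f l -> linear f = false -> In f Y) ->
  exists l0 St0, Forall2 fE l l0 /\ incl l0 St /\
    Permutation St (filter linear l0 ++ St0) /\ state_sim rest St0.
Proof.
  intros (Hmsg & Hlin & Hper) HY Hl.
  assert (Hsplit : perm_eqE E (filter linear l ++ filter linear rest) (filter linear St)).
  { eapply perm_eqE_trans; [|exact Hlin]. apply perm_eqE_of_Permutation.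
    rewrite <- (filter_idem linear l) at 1. rewrite <- filter_app.
    apply Permutation_filter, Permutation_sym; auto. }
  destruct Hsplit as (L & HF & HP).
  destruct (Forall2_app_inv_l _ _ HF) as (L1 & L2 & HF1 & HF2 & ->).
  assert (HL : forall g, In g (L1 ++ L2) -> In g St /\ linear g = true).
  { intros g Hg; apply (filter_In linear). eapply Permutation_in; eauto. }
  destruct (match_premises (St:=St) HF1) as (l0 & Hl0 & Hfl0 & Hl0St).
  { intros g Hg; apply HL, in_or_app; now left. }
  { intros f Hf Hlf; apply Hper; auto. }
  exists l0, (L2 ++ filter (fun g => negb (linear g)) St); repeat split; auto.
  - rewrite Hfl0, app_assoc. eapply Permutation_trans; [apply (Permutation_filter_negb linear)|].
    apply Permutation_app_tail, Permutation_sym; auto.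
  - apply Forall_app; split; apply Forall_forall; intros g Hg;
      eapply Forall_forall; eauto.
    + apply HL, in_or_app; now right.
    + apply filter_In in Hg; tauto.
  - rewrite filter_app, filter_filter_negb, app_nil_r, (forallb_filter_id linear L2).
    + apply perm_eqE_of_Forall2; auto.
    + apply forallb_forall; intros g Hg; apply HL, in_or_app; now right.
  - intros f Hf Hlf.
    destruct (Hper f) as (g & Hg & Hfg); auto.
    { eapply Permutation_in; [apply Permutation_sym; eauto|]; auto using in_or_app. }
    exists g; split; auto. apply in_or_app; right. apply filter_In; split; auto.
    rewrite <- (linear_fact_eqE Hfg), Hlf; auto.
Qed.

Lemma step_of_state_sim (R : rule S Fn -> Prop) ru th Y St l a r rest Y' :
  state_sim Y St -> R ru -> ground_inst th ->
  Forall2 fE l (map (subst_fact th) (prem ru)) ->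
  Forall2 fE a (map (subst_fact th) (lab ru)) ->
  Forall2 fE r (map (subst_fact th) (concl ru)) ->
  Forall (msg_fact ar) (a ++ r) ->
  (forall f, In f l -> linear f = false -> In f Y) ->
  Permutation Y (filter linear l ++ rest) -> Permutation Y' (rest ++ r) ->
  exists St', step ar lin E R St a St' /\ state_sim Y' St'.
Proof.
  intros Hsim HR Hth Hl Ha Hr Hmsg Hpers HY HY'.
  destruct (state_sim_consume Hsim HY Hpers)
    as (l0 & St0 & Hll0 & Hl0St & HSt & Hsim0).
  apply Forall_app in Hmsg as [Hmsga Hmsgr].
  exists (St0 ++ r); split.
  - exists ru, th, l0, r.
    refine (conj HR (conj Hth (conj _ (conj Ha (conj Hr (conj _ (conj _ _))))))).
    + eapply Forall2_trans; [|apply (Forall2_sym (@fact_eqE_sym _ _ E)), Hll0|exact Hl].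
      eauto using fact_eqE_trans.
    + destruct Hsim as [HmsgSt _].
      rewrite !Forall_app; eauto using incl_Forall.
    + intros g Hg _; auto.
    + exists St0; auto.
  - eapply state_sim_perm_eqE; [apply state_sim_app; eauto|].
    apply perm_eqE_of_Permutation, Permutation_sym; auto.
Qed.

Lemma state_sim_relay Y St f g rest Y' :
  state_sim Y St -> fE f g -> (linear f = false -> In f Y) ->
  Permutation Y (filter linear [f] ++ rest) -> Permutation Y' (rest ++ [g]) ->
  state_sim Y' St.
Proof.
  intros Hsim Hfg Hf HY HY'.
  assert (Hrest : perm_eqE E (rest ++ [f]) Y').
  { eapply perm_eqE_trans; [|apply perm_eqE_of_Permutation, Permutation_sym, HY'].
    apply perm_eqE_of_Forall2, Forall2_app; auto using Forall2_reflexive, fact_eqE_refl. }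
  cbn in HY. destruct (linear f) eqn:Hl.
  - apply (state_sim_perm_eqE Hsim). eapply perm_eqE_trans; [|exact Hrest].
    apply perm_eqE_of_Permutation. rewrite HY. apply Permutation_cons_append.
  - apply (state_sim_perm_eqE (state_sim_dup_persistent Hsim (Hf eq_refl) Hl)).
    eapply perm_eqE_trans; [|exact Hrest].
    apply perm_eqE_of_Permutation, Permutation_app_tail; auto.
Qed.

End StateSimulation.

Lemma step_by_rule (Sg : funsig) (S : Type) (ar : S -> nat) (lin : S -> bool)
  (E : term (fsym Sg) -> term (fsym Sg) -> Prop) (R : rule S (fsym Sg) -> Prop) St a St' :
  step ar lin E R St a St' -> exists ru, R ru /\ step ar lin E (eq ru) St a St'.
Proof.
  intros (ru & th & l & r & HR & Hrest); exists ru; split; auto.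
  exists ru, th, l, r; auto.
Qed.

Section Unbuffering.
Variables (Sg : funsig) (FS : factsig) (E : term (fsym Sg) -> term (fsym Sg) -> Prop).
Notation Fn := (fsym Sg).
Notation sfact := (fact (symb FS) Fn).
Notation xfct := (fact (xsym FS) Fn).
Notation lift := (lift_fact Sg FS).
Notation slinear := (linear (slin FS)).
Notation xlinear := (linear (@xlin FS)).

Definition unbuffer (g : xfct) : sfact :=
  match fst g with XOrig _ F => (F, snd g) | XBuf _ F _ => (F, tl (snd g)) end.

Lemma linear_unbuffer g : slinear (unbuffer g) = xlinear g.
Proof. destruct g as [[F|F i] args]; reflexivity. Qed.

Lemma filter_linear_map_unbuffer X :
  filter slinear (map unbuffer X) = map unbuffer (filter xlinear X).
Proof. rewrite filter_map_swap. f_equal. apply filter_ext, linear_unbuffer. Qed.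

Lemma Permutation_map_unbuffer X l rest :
  Permutation X (filter xlinear l ++ rest) ->
  Permutation (map unbuffer X) (filter slinear (map unbuffer l) ++ map unbuffer rest).
Proof.
  intros HX. rewrite filter_linear_map_unbuffer, <- map_app. apply Permutation_map, HX.
Qed.

Lemma persistent_map_unbuffer X l :
  (forall g, In g l -> xlinear g = false -> In g X) ->
  forall f, In f (map unbuffer l) -> slinear f = false -> In f (map unbuffer X).
Proof.
  intros Hl f Hf Hlf. apply in_map_iff in Hf as (g & <- & Hg).
  apply in_map, Hl; auto. rewrite <- linear_unbuffer; auto.
Qed.

Lemma msg_fact_unbuffer g : msg_fact (@xarity FS) g -> msg_fact (sarity FS) (unbuffer g).
Proof.
  destruct g as [[F|F i] args]; unfold msg_fact, unbuffer; cbn; auto.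
  intros [Hlen Hargs]. destruct args as [|t args]; cbn in *; [discriminate|].
  inversion Hargs; auto.
Qed.

Definition copy_fact (f : sfact) (g : xfct) : Prop :=
  g = lift f \/ exists i rid, g = (XBuf FS (fst f) i, rid :: snd f).

Lemma copy_fact_lift L : Forall2 copy_fact L (map lift L).
Proof. induction L; constructor; auto; now left. Qed.

Lemma unbuffer_copy_instance th f g x :
  copy_fact f g -> fact_eqE E x (subst_fact th g) ->
  fact_eqE E (unbuffer x) (subst_fact th f).
Proof.
  intros [->|(i & rid & ->)] [Hs Hargs]; destruct x as [X args]; cbn in *; subst X.
  - split; auto.
  - inversion Hargs; subst; split; auto.
Qed.

Lemma Forall2_unbuffer_copy_instance th P0 P l :
  Forall2 copy_fact P0 P -> Forall2 (fact_eqE E) l (map (subst_fact th) P) ->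
  Forall2 (fact_eqE E) (map unbuffer l) (map (subst_fact th) P0).
Proof.
  intros HP; revert l; induction HP as [|f g P0 P Hfg _ IH]; intros l Hl;
    inversion Hl; subst; cbn; constructor; eauto using unbuffer_copy_instance.
Qed.

Lemma lift_unbuffer_lifted_instance th L a :
  Forall2 (fact_eqE E) a (map (subst_fact th) (map lift L)) -> a = map lift (map unbuffer a).
Proof.
  revert a; induction L as [|f L IH]; intros a Ha;
    inversion Ha as [|[X args] ? a' ? [HX _] Ha']; subst; cbn in *; auto.
  subst X; f_equal; auto.
Qed.

Definition copy_rule (r0 : rule (symb FS) Fn) (ru : rule (xsym FS) Fn) : Prop :=
  Forall2 copy_fact (prem r0) (prem ru) /\ lab ru = map lift (lab r0) /\
  Forall2 copy_fact (concl r0) (concl ru).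

Definition relay_rule (ru : rule (xsym FS) Fn) : Prop :=
  exists f p c, ru = Rule [p] [] [c] /\ copy_fact f p /\ copy_fact f c.

Lemma step_copy_rule (R : rule (symb FS) Fn -> Prop) r0 ru X St a X' :
  state_sim (sarity FS) (slin FS) E (map unbuffer X) St -> R r0 -> copy_rule r0 ru ->
  step (@xarity FS) (@xlin FS) E (eq ru) X a X' ->
  exists St', step (sarity FS) (slin FS) E R St (map unbuffer a) St' /\
    state_sim (sarity FS) (slin FS) E (map unbuffer X') St' /\
    a = map lift (map unbuffer a).
Proof.
  intros Hsim HR0 (Hprem & Hlab & Hconcl)
    (? & th & l & r & <- & Hth & Hl & Ha & Hr & Hmsg & Hpers & rest & HX & HX').
  rewrite Hlab in Ha.
  destruct (step_of_state_sim (rest := map unbuffer rest) (Y' := map unbuffer X') Hsim HR0 Hth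
              (Forall2_unbuffer_copy_instance Hprem Hl)
              (Forall2_unbuffer_copy_instance (copy_fact_lift _) Ha)
              (Forall2_unbuffer_copy_instance Hconcl Hr))
    as (St' & Hstep & Hsim').
  - rewrite <- map_app. apply Forall_map.
    apply Forall_app in Hmsg as [_ Hmsg]. eapply Forall_impl; eauto using msg_fact_unbuffer.
  - apply persistent_map_unbuffer, Hpers.
  - apply Permutation_map_unbuffer, HX.
  - rewrite HX', map_app; reflexivity.
  - exists St'; split; [|split]; eauto using lift_unbuffer_lifted_instance.
Qed.

Lemma step_relay_rule ru X St a X' :
  state_sim (sarity FS) (slin FS) E (map unbuffer X) St -> relay_rule ru ->
  step (@xarity FS) (@xlin FS) E (eq ru) X a X' ->
  a = [] /\ state_sim (sarity FS) (slin FS) E (map unbuffer X') St.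
Proof.
  intros Hsim (f & p & c & -> & Hp & Hc)
    (? & th & l & r & <- & _ & Hl & Ha & Hr & _ & Hpers & rest & HX & HX').
  cbn in Hl, Ha, Hr. inversion Ha; subst a; split; auto.
  inversion Hl as [|fl ? ? ? Hfl Hnil]; inversion Hnil; subst.
  inversion Hr as [|fr ? ? ? Hfr Hnil']; inversion Hnil'; subst.
  apply (state_sim_relay (f := unbuffer fl) (g := unbuffer fr) (rest := map unbuffer rest) Hsim).
  - apply fact_eqE_trans with (subst_fact th f).
    + exact (unbuffer_copy_instance Hp Hfl).
    + exact (fact_eqE_sym (unbuffer_copy_instance Hc Hfr)).
  - intros Hlin. apply (persistent_map_unbuffer Hpers); cbn; auto.
  - apply (Permutation_map_unbuffer (l := [fl])), HX.
  - rewrite HX', map_app; reflexivity.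
Qed.

End Unbuffering.

Section InterfaceSimulation.
Variables (Sg : funsig) (FS : factsig) (n : nat)
  (E : term (fsym Sg) -> term (fsym Sg) -> Prop)
  (Renv : list (rule (symb FS) (fsym Sg)))
  (Rrole : nat -> list (rule (symb FS) (fsym Sg))).
Hypothesis buffered_env : forall F, buffered FS n F -> sclass FS F = CEnv.
Hypothesis role_labels_act : forall i r, role n i -> In r (Rrole i) ->
  Forall (fun f => sclass FS (fst f) = CAct) (lab r).
Notation sfact := (fact (symb FS) (fsym Sg)).
Notation xfct := (fact (xsym FS) (fsym Sg)).
Notation lift := (lift_fact Sg FS).
Notation unbuffer := (@unbuffer Sg FS).

Lemma copy_rule_lift r0 : copy_rule r0 (lift_rule Sg FS r0).
Proof. repeat split; apply copy_fact_lift. Qed.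

Lemma copy_fact_xfact i rid (f : sfact) (g : xfct) : xfact Sg n i rid f g -> copy_fact f g.
Proof. intros [[_ ->]|[_ ->]]; [right; eauto|now left]. Qed.

Lemma xfact_action i rid (f : sfact) (g : xfct) :
  sclass FS (fst f) = CAct -> xfact Sg n i rid f g -> g = lift f.
Proof.
  intros Hact [[Hbuf _]|[_ ->]]; auto.
  apply buffered_env in Hbuf; congruence.
Qed.

Lemma Forall2_xfact_action i rid L L' :
  Forall (fun f => sclass FS (fst f) = CAct) L -> Forall2 (xfact Sg n i rid) L L' ->
  L' = map lift L.
Proof.
  intros Hact HL; induction HL as [|f g L L' Hfg _ IH]; cbn; auto.
  inversion Hact; subst. f_equal; eauto using xfact_action.
Qed.

Lemma copy_rule_xrule i r0 ru :
  role n i -> In r0 (Rrole i) -> xrule Sg n i r0 ru -> copy_rule r0 ru.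
Proof.
  intros Hi Hr0 (rid & _ & Hp & Hl & Hc). split; [|split].
  - eapply Forall2_impl; [|exact Hp]. eauto using copy_fact_xfact.
  - eauto using Forall2_xfact_action.
  - eapply Forall2_impl; [|exact Hc]. eauto using copy_fact_xfact.
Qed.

Lemma relay_rule_io_in i F : relay_rule (io_in_rule Sg FS i F).
Proof.
  exists (F, map TVar (io_vars (sarity FS F))); do 2 eexists.
  split; [reflexivity|split; [now left|right; eauto]].
Qed.

Lemma relay_rule_io_out i G : relay_rule (io_out_rule Sg FS i G).
Proof.
  exists (G, map TVar (io_vars (sarity FS G))); do 2 eexists.
  split; [reflexivity|split; [right; eauto|now left]].
Qed.

Lemma R_intf_cases ru : R_intf Sg n Renv Rrole ru ->
  (exists r0, R_orig Sg FS n Renv Rrole r0 /\ copy_rule r0 ru) \/ relay_rule ru.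
Proof.
  intros [(r0 & Hr0 & _ & ->)|[Hio|(i & Hi & r0 & Hr0 & Hx)]].
  - left; exists r0; split; [now left|apply copy_rule_lift].
  - destruct Hio as [(i & F & _ & _ & _ & ->)|[(i & G & _ & _ & ->)|(r0 & Hr0 & _ & ->)]].
    + right; apply relay_rule_io_in.
    + right; apply relay_rule_io_out.
    + left; exists r0; split; [now left|apply copy_rule_lift].
  - left; exists r0; split; [right; eauto|eapply copy_rule_xrule; eauto].
Qed.

Lemma step_intf_sim X St a X' :
  state_sim (sarity FS) (slin FS) E (map unbuffer X) St ->
  step (@xarity FS) (@xlin FS) E (R_intf Sg n Renv Rrole) X a X' ->
  (a = [] /\ state_sim (sarity FS) (slin FS) E (map unbuffer X') St) \/
  exists St', step (sarity FS) (slin FS) E (R_orig Sg FS n Renv Rrole) St (map unbuffer a) St' /\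
    state_sim (sarity FS) (slin FS) E (map unbuffer X') St' /\ a = map lift (map unbuffer a).
Proof.
  intros Hsim Hstep. destruct (step_by_rule Hstep) as (ru & Hru & Hstep_ru).
  destruct (R_intf_cases Hru) as [(r0 & Hr0 & Hcopy)|Hrelay].
  - right; eapply step_copy_rule; eauto.
  - left; eapply step_relay_rule; eauto.
Qed.

Lemma reach_intf_sim tr X :
  reach (@xarity FS) (@xlin FS) E (R_intf Sg n Renv Rrole) tr X ->
  exists tr0 St, reach (sarity FS) (slin FS) E (R_orig Sg FS n Renv Rrole) tr0 St /\
    state_sim (sarity FS) (slin FS) E (map unbuffer X) St /\
    Forall2 (fun a b => a = map lift b) (filter (@nonempty _) tr) (filter (@nonempty _) tr0).
Proof.
  induction 1 as [|tr X a X' _ IH Hstep].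
  - exists [], []; split; [constructor|split; [apply state_sim_nil|constructor]].
  - destruct IH as (tr0 & St & Hreach & Hsim & Htr).
    destruct (step_intf_sim Hsim Hstep) as [[-> Hsim']|(St' & Hstep0 & Hsim' & Ha)].
    + exists tr0, St; split; [|split]; auto.
      rewrite filter_app, app_nil_r; auto.
    + exists (tr0 ++ [map unbuffer a]), St'; split; [econstructor; eauto|split; auto].
      rewrite !filter_app. apply Forall2_app; auto.
      destruct a; cbn; constructor; auto.
Qed.

End InterfaceSimulation.

Theorem lemma1 (Sg : funsig) (FS : factsig) (n : nat)
  (E : term (fsym Sg) -> term (fsym Sg) -> Prop)
  (Renv : list (rule (symb FS) (fsym Sg)))
  (Rrole : nat -> list (rule (symb FS) (fsym Sg))) :
  @format_assumptions Sg FS n Renv Rrole ->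
  forall t, Tr' (@xarity FS) (@xlin FS) E (@R_intf Sg FS n Renv Rrole) t ->
  exists t0, Tr' (sarity FS) (slin FS) E (@R_orig Sg FS n Renv Rrole) t0 /\
    Forall2 (fun a b => Permutation a (map (@lift_fact Sg FS) b)) t t0.
Proof.
  intros Hfmt t (tr & (X & Hreach) & ->).
  assert (Hbuf : forall F, buffered FS n F -> sclass FS F = CEnv).
  { destruct Hfmt as (_ & Hin & Hout & _). intros F [[HF _]|HF]; auto. }
  assert (Hlab : forall i r, role n i -> In r (Rrole i) ->
                   Forall (fun f => sclass FS (fst f) = CAct) (lab r)).
  { destruct Hfmt as (_&_&_&_&_&_&_&_&_&_&_&_&_&_&_&_&_&_&_&_&_&_&_&_&Hlab&_). exact Hlab. }
  destruct (reach_intf_sim Hbuf Hlab Hreach) as (tr0 & St & Hreach0 & _ & Htr).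
  exists (filter (@nonempty _) tr0); split.
  - exists tr0; split; [exists St|]; auto.
  - eapply Forall2_impl; [|exact Htr]. intros a b ->; apply Permutation_refl.
Qed.
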